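(* Let $M$ be a matroid on a finite set $E$ with $r(M)>0$. If $M$ is a unique expansion matroid, then $M$ is a unique exchange matroid.
   Context: For a matroid $M$: $\mathcal{I}(M)$ its independent sets, $\mathcal{B}(M)$ its bases, $r(M)$ the size of a base. $s(M)=\{A\in\mathcal{I}(M): |A|=r(M)-1\}$. $M$ is a unique expansion matroid if for every $B\in\mathcal{B}(M)$ and every $A\in s(M)$, whenever $e_1,e_2\in B$ satisfy $A\cup\{e_1\}\in\mathcal{B}(M)$ and $A\cup\{e_2\}\in\mathcal{B}(M)$, then $e_1=e_2$. $M$ is a unique exchange matroid if for all $B_1,B_2\in\mathcal{B}(M)$, whenever $x\in B_1-B_2$, $y_1,y_2\in B_2-B_1$, $(B_1-\{x\})\cup\{y_1\}\in\mathcal{B}(M)$ and $(B_1-\{x\})\cup\{y_2\}\in\mathcal{B}(M)$, then $y_1=y_2$. *)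

From mathcomp Require Import all_boot.
Set Implicit Arguments. Unset Strict Implicit. Unset Printing Implicit Defensive.

(* A matroid on the finite ground set T (the whole finType), given by its
   family of independent sets. *)
Record matroid (T : finType) := Matroid {
  indep : pred {set T};
  indep0 : indep set0;
  indep_sub : forall A B : {set T}, indep B -> A \subset B -> indep A;
  indep_aug : forall A B : {set T}, indep A -> indep B -> #|A| < #|B| ->
     exists2 x, x \in B :\: A & indep (x |: A)
}.

Section MatroidDefs.
Variables (T : finType) (M : matroid T).

Definition is_base (B : {set T}) : bool := maxset (indep M) B.

(* r(M): the size of a base (all bases have the same size) *)
Definition mrank : nat := \max_(B : {set T} | is_base B) #|B|.

Definition sM (A : {set T}) : bool := indep M A && (#|A| == mrank.-1).

Definition unique_expansion : Prop :=
  forall B A : {set T}, is_base B -> sM A ->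
  forall e1 e2 : T, e1 \in B -> e2 \in B ->
    is_base (e1 |: A) -> is_base (e2 |: A) -> e1 = e2.

Definition unique_exchange : Prop :=
  forall B1 B2 : {set T}, is_base B1 -> is_base B2 ->
  forall x y1 y2 : T, x \in B1 :\: B2 -> y1 \in B2 :\: B1 -> y2 \in B2 :\: B1 ->
    is_base (y1 |: (B1 :\ x)) -> is_base (y2 |: (B1 :\ x)) -> y1 = y2.
End MatroidDefs.

From mathcomp Require Import all_boot.

(* Deleting x from the base B1 leaves a set of s(M); both exchanges y1, y2 are
   expansions of that set by elements of the base B2, so unique expansion
   forces y1 = y2. *)

Set Implicit Arguments. Unset Strict Implicit. Unset Printing Implicit Defensive.

Section Bases.
Variables (T : finType) (M : matroid T).

Lemma base_card_le (B B' : {set T}) :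
  is_base M B -> is_base M B' -> #|B'| <= #|B|.
Proof.
move=> /maxsetP [iB maxB] /maxsetP [iB' _].
rewrite leqNgt; apply/negP => ltBB'.
have [x /setDP [_ xNB] ixB] := indep_aug iB iB' ltBB'.
have xBE : x |: B = B by apply: maxB ixB (subsetUr _ _).
by move: (setU11 x B); rewrite xBE (negbTE xNB).
Qed.

Lemma card_base (B : {set T}) : is_base M B -> #|B| = mrank M.
Proof.
move=> bB; apply/eqP; rewrite eqn_leq.
rewrite (@leq_bigmax_cond _ (is_base M) (fun B : {set T} => #|B|) B bB) /=.
by apply/bigmax_leqP => B' bB'; apply: base_card_le.
Qed.

Lemma sM_baseD1 (B : {set T}) (x : T) : is_base M B -> x \in B -> sM M (B :\ x).
Proof.
move=> bB xB; apply/andP; split.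
  exact: indep_sub (maxsetp bB) (subsetDl _ _).
by rewrite -(card_base bB) (cardsD1 x B) xB.
Qed.

End Bases.

Theorem proposition18 (T : finType) (M : matroid T) :
  0 < mrank M -> unique_expansion M -> unique_exchange M.
Proof.
move=> _ uniqM B1 B2 b1 b2 x y1 y2 /setDP [xB1 _] /setDP [y1B2 _] /setDP [y2B2 _].
exact: uniqM b2 (sM_baseD1 b1 xB1) y1 y2 y1B2 y2B2.
Qed.
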